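(* Let $\boldsymbol\Sigma\in\mathbb R^{r\times r}$ be symmetric positive definite, $\boldsymbol\alpha\in\mathbb R^{k\times p}$, $\mathbf U\in\mathbb R^{r\times k}$ of full column rank, $\boldsymbol\beta=\mathbf U\boldsymbol\alpha$, $\mathcal B=\mathrm{span}(\boldsymbol\beta)$ and $\mathcal A=\mathrm{span}(\boldsymbol\alpha)$. Let $u=\dim\mathcal E_{\boldsymbol\Sigma}(\mathcal B)$, $\boldsymbol\Gamma\in\mathbb R^{r\times u}$ a semi-orthogonal basis of $\mathcal E_{\boldsymbol\Sigma}(\mathcal B)$ and $(\boldsymbol\Gamma,\boldsymbol\Gamma_0)$ an orthogonal matrix. Assume $\mathbf U=(\boldsymbol\Gamma\mathbf G,\boldsymbol\Gamma_0\mathbf G_0)$ where $\mathbf G\in\mathbb R^{u\times u_1}$ and $\mathbf G_0\in\mathbb R^{(r-u)\times(k-u_1)}$ both have full column rank (so $u_1\le u$). Let $\boldsymbol\Sigma_{D|S}=(\mathbf U^T\boldsymbol\Sigma^{-1}\mathbf U)^{-1}\in\mathbb R^{k\times k}$. Then $\dim\{\mathcal E_{\boldsymbol\Sigma_{D|S}}(\mathcal A)\}\le u_1\le\dim\{\mathcal E_{\boldsymbol\Sigma}(\mathcal B)\}$.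
   Context: For a symmetric matrix $\mathbf M\in\mathbb R^{m\times m}$, a subspace $\mathcal R\subseteq\mathbb R^m$ is a reducing subspace of $\mathbf M$ if $\mathbf M\mathcal R\subseteq\mathcal R$; for a subspace $\mathcal S\subseteq\mathbb R^m$, the $\mathbf M$-envelope $\mathcal E_{\mathbf M}(\mathcal S)$ is the smallest reducing subspace of $\mathbf M$ containing $\mathcal S$. Interpretation: in the model $\mathbf Y=\mathbf U\boldsymbol\alpha_0+\mathbf U\boldsymbol\alpha\mathbf X+\boldsymbol\varepsilon$, $\boldsymbol\varepsilon\sim N(0,\boldsymbol\Sigma)$, with $\mathbf Y_D=(\mathbf U^T\mathbf U)^{-1}\mathbf U^T\mathbf Y$ and $\mathbf Y_S=\mathbf U_0^T\mathbf Y$ ($\mathbf U_0$ a semi-orthogonal basis of $\mathrm{span}(\mathbf U)^\perp$), $\boldsymbol\Sigma_{D|S}$ is the conditional covariance of $\mathbf Y_D$ given $(\mathbf X,\mathbf Y_S)$. *)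

(* Subspaces of R^m are represented as row spaces (mxalgebra)
   of matrices with m columns; the column span of a matrix A is the row space
   of A^T. *)
From HB Require Import structures.
From mathcomp Require Import all_boot all_order all_algebra.
Set Implicit Arguments. Unset Strict Implicit. Unset Printing Implicit Defensive.
Import Order.TTheory GRing.Theory Num.Theory.
Local Open Scope ring_scope.

Definition spd (R : realFieldType) (m : nat) (S : 'M[R]_m) : Prop :=
  S^T = S /\ forall v : 'rV[R]_m, v != 0 -> 0 < (v *m S *m v^T) 0 0.

(* the subspace (row space of) RR is a reducing subspace of M : M RR ⊆ RR,
   i.e. for every (column) vector x in RR, M x ∈ RR; on row vectors x^T M^T. *)
Definition reducing (R : fieldType) (m n : nat) (M : 'M[R]_m) (RR : 'M[R]_(n, m)) : bool :=
  (RR *m M^T <= RR)%MS.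

Definition is_envelope (R : fieldType) (m n1 n2 : nat) (M : 'M[R]_m)
    (S : 'M[R]_(n1, m)) (E : 'M[R]_(n2, m)) : Prop :=
  [/\ reducing M E, (S <= E)%MS &
      forall (n3 : nat) (RR : 'M[R]_(n3, m)), reducing M RR -> (S <= RR)%MS -> (E <= RR)%MS].

(** The span A of alpha lies in the first u1 coordinates of R^k, because U alpha
    lies in the envelope E = span Gamma and Gamma0 G0 is injective.  Since E
    reduces Sigma, and hence Sigma^-1, the matrix U^T Sigma^-1 U is block
    diagonal for the splitting k = u1 + (k - u1); so the first u1 coordinates
    form a reducing subspace of its inverse Sigma_{D|S} that contains A, and the
    envelope of A has dimension at most u1.  The other inequality is
    u1 = rank G <= u = rank Gamma. *)
From HB Require Import structures.
From mathcomp Require Import all_boot all_order all_algebra.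
Import Order.TTheory GRing.Theory Num.Theory.
Set Implicit Arguments. Unset Strict Implicit. Unset Printing Implicit Defensive.
Local Open Scope ring_scope.

Section Reducing.
Variable F : fieldType.

Lemma stablemx_invmx m n (V : 'M[F]_(m, n)) (f : 'M_n) :
  stablemx V f -> stablemx V (invmx f).
Proof.
move=> Vf; have [f_unit | /invmx_out-> //] := boolP (f \in unitmx).
have V_Vf : (V <= V *m f)%MS.
  by rewrite -(mxrank_leqif_sup Vf) mxrankMfree ?row_free_unit.
by rewrite -[X in (_ <= X)%MS](mulmxK f_unit) submxMr.
Qed.

Lemma reducing_invmx m n (M : 'M[F]_m) (V : 'M_(n, m)) :
  reducing M V -> reducing (invmx M) V.
Proof. by rewrite /reducing trmx_inv; apply: stablemx_invmx. Qed.

Lemma eqmx_reducing m n1 n2 (M : 'M[F]_m) (V : 'M_(n1, m)) (W : 'M_(n2, m)) :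
  (V :=: W)%MS -> reducing M V = reducing M W.
Proof. by move=> eqVW; rewrite /reducing (eqmxMr _ eqVW) eqVW. Qed.

Lemma reducing_row_mx1 n1 n2 (M : 'M[F]_(n1 + n2)) :
  dlsubmx M = 0 -> reducing M (row_mx 1%:M 0).
Proof.
move=> M21; rewrite /reducing -[M^T]submxK -trmx_dlsub M21 trmx0.
rewrite mul_row_block !mul1mx !mul0mx !addr0.
by apply/submxP; exists (ulsubmx M^T); rewrite mul_mx_row mulmx1 mulmx0.
Qed.

Lemma submx_row_mx1 m n1 n2 (A : 'M[F]_(m, n1 + n2)) :
  rsubmx A = 0 -> (A <= row_mx 1%:M (0 : 'M_(n1, n2)))%MS.
Proof.
move=> A2; apply/submxP; exists (lsubmx A).
by rewrite mul_mx_row mulmx1 mulmx0 -A2 hsubmxK.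
Qed.

Lemma reducing_orth_mulmx m a b (M : 'M[F]_m) (X : 'M_(m, a)) (Y : 'M_(m, b)) :
  reducing M X^T -> X^T *m Y = 0 -> Y^T *m M *m X = 0.
Proof.
move=> /submxP[D XM] XY; apply: trmx_inj.
by rewrite !trmx_mul trmxK mulmxA XM -mulmxA XY mulmx0 trmx0.
Qed.

Lemma submx_orth_mulmx m a b c (X : 'M[F]_(m, a)) (Y : 'M_(m, b)) (Z : 'M_(m, c)) :
  (Z^T <= X^T)%MS -> X^T *m Y = 0 -> Y^T *m Z = 0.
Proof.
move=> /submxP[D ZX] XY; apply: trmx_inj.
by rewrite trmx_mul trmxK ZX -mulmxA XY mulmx0 trmx0.
Qed.

Lemma mulmx_col_free_eq0 m n p (B : 'M[F]_(m, n)) (A : 'M_(n, p)) :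
  \rank B = n -> (B *m A == 0) = (A == 0).
Proof.
move=> rB; rewrite -trmx_eq0 trmx_mul mulmx_free_eq0 ?trmx_eq0 //.
by rewrite /row_free mxrank_tr rB.
Qed.

Lemma rank_orthonormal m n (X : 'M[F]_(m, n)) : X^T *m X = 1%:M -> \rank X = n.
Proof.
move=> XX; apply/eqP; rewrite eqn_leq rank_leq_col -mxrank_tr.
by apply: (@mulmx1_min_rank _ _ _ _ _ 1%:M X); rewrite mul1mx.
Qed.

End Reducing.

Lemma dlsubmx_congr_row_mx (R : pzRingType) m n1 n2
    (N : 'M[R]_m) (A : 'M_(m, n1)) (B : 'M_(m, n2)) :
  dlsubmx ((row_mx A B)^T *m N *m row_mx A B) = B^T *m N *m A.
Proof. by rewrite tr_row_mx mul_col_mx mul_col_row block_mxKdl. Qed.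

Theorem proposition4 (R : realFieldType) (r p u u1 k0 : nat)
    (Sigma : 'M[R]_r) (alpha : 'M[R]_(u1 + k0, p))
    (E : 'M[R]_r) (Gamma : 'M[R]_(r, u)) (Gamma0 : 'M[R]_(r, r - u))
    (G : 'M[R]_(u, u1)) (G0 : 'M[R]_(r - u, k0)) :
  spd Sigma ->
  (* E = E_Sigma(span(beta)), beta = U alpha, U = (Gamma G, Gamma0 G0) *)
  is_envelope Sigma ((row_mx (Gamma *m G) (Gamma0 *m G0) *m alpha)^T) E ->
  (* Gamma semi-orthogonal basis of E *)
  (Gamma^T == E)%MS ->
  (* (Gamma, Gamma0) orthogonal *)
  Gamma^T *m Gamma = 1%:M -> Gamma0^T *m Gamma0 = 1%:M -> Gamma^T *m Gamma0 = 0 ->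
  (* G, G0, U of full column rank *)
  \rank G = u1 -> \rank G0 = k0 ->
  \rank (row_mx (Gamma *m G) (Gamma0 *m G0)) = (u1 + k0)%N ->
  let U := row_mx (Gamma *m G) (Gamma0 *m G0) in
  let SigmaDS := invmx (U^T *m invmx Sigma *m U) in
  forall (n : nat) (EA : 'M[R]_(n, u1 + k0)),
    is_envelope SigmaDS alpha^T EA ->
    (\rank EA <= u1)%N /\ (u1 <= \rank E)%N.
Proof.
move=> _ [redE sBE _] /eqmxP GE GG G0G0 GG0 rG rG0 _ U SDS n EA [_ sAEA minEA].
split; last by rewrite -GE mxrank_tr rank_orthonormal // -rG rank_leq_row.
have red_Gamma : reducing (invmx Sigma) Gamma^T.
  by apply: reducing_invmx; rewrite (eqmx_reducing _ GE); exact: redE.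
have U_block_diag : dlsubmx (U^T *m invmx Sigma *m U) = 0.
  rewrite dlsubmx_congr_row_mx !trmx_mul !mulmxA -(mulmxA _ Gamma0^T).
  by rewrite -(mulmxA _ _ Gamma) (reducing_orth_mulmx red_Gamma GG0) mulmx0 mul0mx.
have alpha_low : dsubmx alpha = 0.
  have Gamma0_Ualpha : Gamma0^T *m (U *m alpha) = 0.
    by apply: submx_orth_mulmx GG0; rewrite GE; exact: sBE.
  have Gamma0_Gamma : Gamma0^T *m Gamma = 0 by rewrite -[LHS]trmxK trmx_mul trmxK GG0 trmx0.
  apply/eqP; rewrite -(mulmx_col_free_eq0 _ rG0); apply/eqP.
  move: Gamma0_Ualpha; rewrite -[alpha]vsubmxK mul_row_col mulmxDr !mulmxA.
  by rewrite Gamma0_Gamma G0G0 !mul0mx add0r mul1mx col_mxKd.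
apply: leq_trans (mxrankS (minEA _ (row_mx 1%:M 0) _ _)) (rank_leq_row _).
  exact/reducing_invmx/reducing_row_mx1.
by apply: submx_row_mx1; rewrite -trmx_dsub alpha_low trmx0.
Qed.
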